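(* Let $p$ be a prime, $m\ge0$ an integer, and $r,s$ positive integers with $r\leq\min\{s,p^m\}$. If $s\equiv1\pmod{p^m}$, then $\varepsilon(r,s,p)=(r-1,-1,\dots,-1)$. If $s\equiv-1\pmod{p^m}$, then $\varepsilon(r,s,p)=(1,\dots,1,-(r-1))$.
   Context: For a positive integer $n$, let $J_n$ denote the $n\times n$ matrix with $1$s in positions $(i,i)$ for $1\le i\le n$ and $(i,i+1)$ for $1\le i<n$, and $0$s elsewhere. For $1\le r\le s$, the Jordan canonical form of $J_r\otimes J_s$ over a field of characteristic $p$ is $J_{\lambda_1}\oplus\cdots\oplus J_{\lambda_r}$ with $\lambda_1\ge\cdots\ge\lambda_r>0$; write $\lambda(r,s,p)=(\lambda_1,\dots,\lambda_r)$. The deviation vector is $\varepsilon(r,s,p)=(\lambda_1-s,\dots,\lambda_r-s)$ (a vector of length $r$). *)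

From mathcomp Require Import all_boot all_order all_algebra.
From mathcomp Require Export mxtens.
Set Implicit Arguments. Unset Strict Implicit. Unset Printing Implicit Defensive.
Import GRing.Theory.
Local Open Scope ring_scope.

Definition jordan_block (F : fieldType) (n : nat) : 'M[F]_n :=
  \matrix_(i, j) ((i == j :> nat) || (j == i.+1 :> nat))%:R.

(* Positions (0-based) where a new block starts in a block-diagonal matrix
   with consecutive diagonal blocks of sizes l_1, l_2, ... *)
Definition block_starts (l : seq nat) : seq nat :=
  [seq sumn (take k l) | k <- iota 1 (size l)].

(* The block diagonal matrix J_{l_1} (+) J_{l_2} (+) ... (+) J_{l_k},
   as an n x n matrix (meaningful when sumn l = n). *)
Definition jordan_diag (F : fieldType) (n : nat) (l : seq nat) : 'M[F]_n :=
  \matrix_(i, j)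
    ((i == j :> nat) || ((j == i.+1 :> nat) && (i.+1 \notin block_starts l)))%:R.

Definition is_jordan_type (F : fieldType) (n : nat) (A : 'M[F]_n) (l : seq nat) : Prop :=
  [/\ sumn l = n, all (fun x => 0 < x)%N l, sorted geq l &
      exists2 P : 'M[F]_n, P \in unitmx & P *m A *m invmx P = jordan_diag F n l].

Definition deviation (s : nat) (l : seq nat) : seq int :=
  [seq (x%:Z - s%:Z)%R | x <- l].

(* Write [J_r (x) J_s = (1 + X) (1 + Y) = 1 + N] with the commuting nilpotents
   [X = (J_r - 1) (x) 1], [Y = 1 (x) (J_s - 1)] and [N = X + Y + X Y]. As [X ^ r = 0] and
   [r <= p ^ m], Frobenius gives [N ^ (a p ^ m) = Y ^ (a p ^ m)].
   If [s - 1 = a p ^ m] then [N ^ (s - 1 + k) = Y ^ (s - 1) X ^ k], so [e0] generates a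
   Jordan chain of [N] of length [s - 1 + r] and each [e0 X ^ b - e0 N ^ b], [0 < b < r],
   one of length [s - 1].
   If [s + 1 = a p ^ m] then [N ^ (s + 1) = 0], so each [e0 X ^ b], [b < r - 1], generates a
   chain of length [s + 1]; as [binomial s j = (-1) ^ j] in characteristic [p] for
   [j < p ^ m], [(N - X) ^ s = sum_(j < r) X ^ j N ^ (s - j)], which vanishes since
   [N - X = Y (1 + X)], so [sum_(j < r) e0 X ^ j N ^ (r - 1 - j)] generates a chain of
   length [s - r + 1].
   In both cases the chains span modulo the image of [N], hence form a Jordan basis; the
   Jordan type is unique because it is read off the ranks of the powers of [A - 1]. *)

From mathcomp Require Import all_boot all_order all_algebra zify.
Import GRing.Theory.
Set Implicit Arguments. Unset Strict Implicit. Unset Printing Implicit Defensive.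

Lemma sumn_subnS (s : seq nat) k :
  sumn [seq x - k | x <- s] = sumn [seq x - k.+1 | x <- s] + count (fun x => k < x) s.
Proof.
elim: s => [|x s IH] //=; rewrite IH.
by case: (ltnP k x) => /=; move: (sumn _) (count _ _); lia.
Qed.

Lemma count_ltnS (s : seq nat) k :
  count (fun x => k < x) s = count (pred1 k.+1) s + count (fun x => k.+1 < x) s.
Proof.
elim: s => [|x s IH] //=; rewrite IH.
by case: (ltngtP k.+1 x) => /=; move: (count _ _) (count _ _); lia.
Qed.

Lemma count_pred0_pos (s : seq nat) : all (fun x => 0 < x) s -> count (pred1 0) s = 0.
Proof. by move=> /allP s_pos; apply/count_memPn/negP => /s_pos. Qed.

Lemma sorted_sumn_subn_inj (l l' : seq nat) :
    all (fun x => 0 < x) l -> all (fun x => 0 < x) l' -> sorted geq l -> sorted geq l' ->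
  (forall k, sumn [seq x - k | x <- l] = sumn [seq x - k | x <- l']) -> l = l'.
Proof.
move=> l_pos l'_pos l_sorted l'_sorted eq_sums.
have eq_count_gt k : count (fun x => k < x) l = count (fun x => k < x) l'.
  by apply/eqP; have /eqP := eq_sums k; rewrite sumn_subnS (sumn_subnS l') eq_sums eqn_add2l.
apply: (sorted_eq (leT := geq)) => //.
- by move=> a b c /= ba cb; apply: leq_trans cb ba.
- by move=> a b /andP [ba ab]; apply/eqP; rewrite eqn_leq; apply/andP.
apply/allP => -[|x] _; apply/eqP; first by rewrite !count_pred0_pos.
have /eqP := eq_count_gt x.
by rewrite count_ltnS (count_ltnS l') eq_count_gt eqn_add2r => /eqP.
Qed.

Lemma sorted_nseq_cons (x y k : nat) : y <= x -> sorted geq (x :: nseq k y).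
Proof.
move=> le_yx; elim: k x le_yx => [|k IH] x le_yx //=.
by rewrite le_yx /=; have := IH y (leqnn y).
Qed.

Lemma sorted_rcons_nseq (x y k : nat) : y <= x -> sorted geq (rcons (nseq k x) y).
Proof.
move=> le_yx; case: k => [|k] //=.
by elim: k => [|k IH] /=; rewrite ?le_yx ?leqnn.
Qed.

Definition psumn (l : seq nat) k := sumn (take k l).

Section BlockStarts.
Variable l : seq nat.

Lemma psumn0 : psumn l 0 = 0.
Proof. by rewrite /psumn take0. Qed.

Lemma psumnS k : k < size l -> psumn l k.+1 = psumn l k + nth 0 l k.
Proof. by move=> lt_k; rewrite /psumn (take_nth 0 lt_k) sumn_rcons. Qed.

Lemma psumn_size : psumn l (size l) = sumn l.
Proof. by rewrite /psumn take_size. Qed.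

Lemma leq_psumn a b : a <= b -> psumn l a <= psumn l b.
Proof. by move=> /subnKC <-; rewrite /psumn takeD sumn_cat leq_addr. Qed.

Lemma block_startsP i :
  reflect (exists2 k, 0 < k <= size l & i = psumn l k) (i \in block_starts l).
Proof.
apply: (iffP mapP) => [[k]|[k k_range ->]].
  by rewrite mem_iota add1n ltnS => k_range ->; exists k.
by exists k; rewrite // mem_iota add1n ltnS.
Qed.

Lemma index_block_starts i : i \in block_starts l ->
  (index i (block_starts l)).+1 <= size l /\ psumn l (index i (block_starts l)).+1 = i.
Proof.
move=> bs_i; have lt_index : index i (block_starts l) < size l.
  by rewrite -(size_iota 1 (size l)) -(size_map (psumn l)) index_mem.
split=> //; have := nth_index 0 bs_i.
by rewrite /block_starts (nth_map 0) ?size_iota // nth_iota // add1n.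
Qed.

Hypothesis l_pos : all (fun x => 0 < x) l.

Lemma ltn_psumn a b : a < b -> b <= size l -> psumn l a < psumn l b.
Proof.
move=> lt_ab le_b; apply: (@leq_trans (psumn l a.+1)); last exact: leq_psumn.
have lt_a : a < size l by apply: leq_trans le_b.
by rewrite psumnS // -addn1 leq_add2l; move/allP: l_pos; apply; rewrite mem_nth.
Qed.

Lemma psumn_inj a b : a <= size l -> b <= size l -> psumn l a = psumn l b -> a = b.
Proof.
move=> le_a le_b eq_ab; case: (ltngtP a b) => // [lt_ab|lt_ba].
  by have := ltn_psumn lt_ab le_b; rewrite eq_ab ltnn.
by have := ltn_psumn lt_ba le_a; rewrite eq_ab ltnn.
Qed.

End BlockStarts.

Lemma block_starts_cons x l : block_starts (x :: l) = x :: map (addn x) (block_starts l).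
Proof.
rewrite /block_starts /= take0 addn0; congr (_ :: _).
by rewrite -[2]/(1 + 1)%N iotaDl -!map_comp; apply: eq_map => k /=; rewrite add0n.
Qed.

Lemma sum_nat_ltn x y : y <= x -> \sum_(0 <= i < x) (i < y) = y.
Proof.
move=> le_yx; rewrite (@big_cat_nat _ _ _ y) //=.
rewrite (eq_big_nat _ _ (F2 := fun _ => 1%N)); last by move=> i /andP [_ ->].
rewrite sum_nat_const_nat subn0 muln1 big_nat_cond big1 ?addn0 //.
by move=> i /andP [/andP [le_yi _] _]; rewrite ltnNge le_yi.
Qed.

Definition same_block (l : seq nat) i k :=
  (i + k < sumn l) && all (fun t => t \notin block_starts l) (iota i.+1 k).

Lemma sum_same_block l k :
  \sum_(0 <= i < sumn l) same_block l i k = sumn [seq x - k | x <- l].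
Proof.
elim: l => [|x l IH]; first by rewrite big_geq.
rewrite /= (@big_cat_nat _ _ _ x) ?leq_addr //= -{3}[x]add0n big_addn addKn -IH.
congr (_ + _).
  rewrite -(sum_nat_ltn (leq_subr k x)); apply: eq_big_nat => i /andP [_ lt_ix].
  rewrite /same_block block_starts_cons /=; congr (nat_of_bool _).
  case: (ltnP (i + k) x) => [lt_ikx|le_xik].
    rewrite (ltn_addr _ lt_ikx) /= (_ : i < x - k); last lia.
    apply/allP => t; rewrite mem_iota in_cons => /andP [lt_it le_tik].
    by apply/negP => /orP [/eqP ?|/mapP [t' _ ?]]; lia.
  rewrite (_ : i < x - k = false); last lia.
  have x_in : x \in iota i.+1 k by rewrite mem_iota; apply/andP; lia.
  by apply/negP => /andP [_ /allP /(_ x x_in)]; rewrite in_cons eqxx.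
apply: eq_big_nat => i _; rewrite /same_block block_starts_cons /=.
rewrite (_ : i + x + k < x + sumn l = (i + k < sumn l)); last by apply/idP/idP; lia.
congr (_ && _); rewrite -addSn addnC iotaDl all_map; apply: eq_in_all => t.
rewrite mem_iota /= in_cons (mem_map (@addnI x)) => /andP [lt_it _].
by rewrite (_ : (x + t == x) = false) //; lia.
Qed.

Local Open Scope ring_scope.

Section JordanNil.
Variables (F : fieldType) (n : nat) (l : seq nat).

Definition jordan_nil : 'M[F]_n :=
  \matrix_(i, j) ((j == i.+1 :> nat) && (i.+1 \notin block_starts l))%:R.

Lemma jordan_diagE : jordan_diag F n l = 1%:M + jordan_nil.
Proof.
apply/matrixP => i j; rewrite !mxE.
have [->|ne_ij] /= := eqVneq i j; first by rewrite eqxx (ltn_eqF (ltnSn j)) addr0.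
by rewrite add0r (_ : (i == j :> nat) = false) //; apply: contraNF ne_ij; rewrite -val_eqE.
Qed.

Lemma jordan_nilX k (i j : 'I_n) : (jordan_nil ^+ k) i j =
  ((j == (i + k)%N :> nat) && all (fun t => t \notin block_starts l) (iota i.+1 k))%:R.
Proof.
elim: k i j => [|k IH] i j; first by rewrite expr0 !mxE addn0 andbT eq_sym.
rewrite exprSr -mulmxE mxE; under eq_bigr do rewrite IH mxE.
have [lt_ikn|le_nik] := ltnP (i + k)%N n; last first.
  rewrite big1 => [|m _]; last first.
    by rewrite (_ : (m == (i + k)%N :> nat) = false) ?mul0r //; move: (ltn_ord m); lia.
  by rewrite (_ : (j == (i + k.+1)%N :> nat) = false) //; move: (ltn_ord j); lia.
rewrite (bigD1 (Ordinal lt_ikn)) // big1 => [|m ne_m]; last first.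
  rewrite (_ : (m == (i + k)%N :> nat) = false) ?mul0r //.
  by apply: contraNF ne_m; rewrite -val_eqE.
rewrite -[k.+1]addn1 iotaD all_cat /= eqxx addr0 -natrM mulnb addn1 addnS andbT.
by rewrite andbCA.
Qed.

End JordanNil.

Lemma mxrank_partial_perm (F : fieldType) n (c : pred 'I_n) (g : 'I_n -> 'I_n)
    (T : 'M[F]_n) :
  {in c &, injective g} -> (forall i j, T i j = (c i && (j == g i))%:R) -> \rank T = #|c|.
Proof.
move=> g_inj T_ij.
pose R : 'M[F]_(#|c|, n) := \matrix_(a < #|c|) row (enum_val a) T.
have R_ij a j : R a j = (j == g (enum_val a))%:R.
  by have c_a : c (enum_val a) := enum_valP a; rewrite !mxE T_ij c_a.
have eqRT : (R == T)%MS.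
  apply/andP; split; apply/row_subP => i; first by rewrite rowK row_sub.
  have [c_i|/negbTE nc_i] := boolP (c i).
    by have := row_sub (enum_rank_in c_i i) R; rewrite rowK enum_rankK_in.
  by rewrite (_ : row i T = 0) ?sub0mx //; apply/rowP => j; rewrite !mxE T_ij nc_i.
clearbody R.
have R_orth : R *m R^T = 1%:M.
  apply/matrixP => a b; rewrite !mxE.
  under eq_bigr do rewrite !mxE !R_ij.
  rewrite (bigD1 (g (enum_val a))) //= big1 => [|j /negbTE ->]; last by rewrite mul0r.
  rewrite eqxx mul1r addr0 (inj_in_eq g_inj) ?enum_valP //.
  by rewrite (inj_eq enum_val_inj) eq_sym.
rewrite -(eqmx_rank eqRT); apply/eqP; rewrite eqn_leq rank_leq_row /=.
by have := mxrankM_maxl R R^T; rewrite R_orth mxrank1.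
Qed.

Lemma mxrank_jordan_nilX (F : fieldType) l k :
  \rank (jordan_nil F (sumn l) l ^+ k) = sumn [seq x - k | x <- l]%N.
Proof.
pose g (i : 'I_(sumn l)) := insubd i (i + k)%N.
rewrite (@mxrank_partial_perm _ _ (fun i => same_block l i k) g).
- rewrite -sum1_card -(big_mkord (same_block l ^~ k) (fun _ => 1%N)) big_mkcond.
  by rewrite -sum_same_block; apply: eq_bigr => i _; case: ifP.
- move=> i i' /andP [lt_i _] /andP [lt_i' _] /(congr1 val).
  by rewrite !val_insubd lt_i lt_i' => /addIn /val_inj.
move=> i j; rewrite jordan_nilX /same_block /g.
have [lt_ik|le_ik] := ltnP (i + k)%N (sumn l).
  by rewrite andbC -val_eqE val_insubd lt_ik.
by rewrite (_ : (j == (i + k)%N :> nat) = false) //; move: (ltn_ord j); lia.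
Qed.

Lemma mxrank_conj (F : fieldType) n (P M : 'M[F]_n) : P \in unitmx ->
  \rank (P *m M *m invmx P) = \rank M.
Proof.
move=> P_unit; rewrite mxrankMfree ?row_free_unit ?unitmx_inv //.
by rewrite eqmxMfull // row_full_unit.
Qed.

Lemma conj_mxX (F : fieldType) n (P M : 'M[F]_n) k : P \in unitmx ->
  (P *m M *m invmx P) ^+ k = P *m M ^+ k *m invmx P.
Proof.
move=> P_unit; elim: k => [|k IH]; first by rewrite !expr0 mulmx1 mulmxV.
by rewrite !exprS IH -!mulmxE !mulmxA mulmxKV.
Qed.

Lemma is_jordan_type_rank (F : fieldType) n (A : 'M[F]_n) l : is_jordan_type A l ->
  forall k, \rank ((A - 1%:M) ^+ k) = sumn [seq x - k | x <- l]%N.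
Proof.
case=> sum_l _ _ [P P_unit PAP] k; subst n.
rewrite -(mxrank_conj _ P_unit) -conj_mxX // mulmxBr mulmxBl mulmx1 mulmxV // PAP.
by rewrite jordan_diagE addrC addKr mxrank_jordan_nilX.
Qed.

Lemma is_jordan_type_uniq (F : fieldType) n (A : 'M[F]_n) l l' :
  is_jordan_type A l -> is_jordan_type A l' -> l = l'.
Proof.
move=> type_l type_l'.
have [_ l_pos l_sorted _] := type_l; have [_ l'_pos l'_sorted _] := type_l'.
apply: sorted_sumn_subn_inj => // k.
by rewrite -(is_jordan_type_rank type_l) -(is_jordan_type_rank type_l').
Qed.

Lemma is_jordan_typeE (F : fieldType) n (A : 'M[F]_n) l0 :
  is_jordan_type A l0 -> forall l, is_jordan_type A l <-> l = l0.
Proof. by move=> type_l0 l; split=> [/is_jordan_type_uniq/(_ type_l0)|->]. Qed.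

Lemma sub1mx_addsmx_nilpotent (F : fieldType) m n (W : 'M[F]_(m, n)) (N : 'M[F]_n) k :
  (W *m N <= W)%MS -> N ^+ k = 0 -> (1%:M <= W + N)%MS -> (1%:M <= W)%MS.
Proof.
move=> WN_W N_nil full_WN.
suff full_WNX j : (1%:M <= W + N ^+ j)%MS by have := full_WNX k; rewrite N_nil addsmx0.
elim: j => [|j IH]; first by rewrite expr0 addsmxSr.
apply: submx_trans full_WN _; rewrite addsmx_sub addsmxSl /=.
have := submxMr N IH; rewrite mul1mx => /submx_trans; apply.
by rewrite addsmxMr exprSr mulmxE addsmxS.
Qed.

Section JordanChains.
Variables (F : fieldType) (n : nat) (N : 'M[F]_n) (l : seq nat) (v : nat -> 'rV[F]_n).
Hypotheses (l_pos : all (fun x => 0 < x)%N l) (l_sum : sumn l = n).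
Hypothesis v_nil : forall b, (b < size l)%N -> v b *m N ^+ nth 0%N l b = 0.
Local Notation bs := (block_starts l).

(* Row [i] is [v b *m N ^+ j] when [i] is the [j]-th position of the [b]-th block. *)
Fixpoint chain_row i : 'rV[F]_n :=
  if i is i'.+1 then if i \in bs then v (index i bs).+1 else chain_row i' *m N else v 0.

Lemma chain_rowP i : (i < n)%N -> exists b j, [/\ (b < size l)%N, (j < nth 0%N l b)%N,
  i = (psumn l b + j)%N & chain_row i = v b *m N ^+ j].
Proof.
elim: i => [|i IH] lt_in.
  case: l l_pos l_sum lt_in => [_ /= n0 lt_in|x l' /andP [x_pos _] _ _].
    by rewrite -n0 in lt_in.
  by exists 0%N, 0%N; rewrite psumn0 expr0 mulmx1.
have [b [j [lt_b lt_j eq_i row_i]]] := IH (ltnW lt_in); subst i; rewrite /=.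
case: ifP => [bs_i|nbs_i].
  have [le_b' start_b'] := index_block_starts bs_i.
  set b' := (index _ _).+1 in le_b' start_b' *.
  have lt_b' : (b' < size l)%N.
    rewrite ltn_neqAle le_b' andbT; apply: contraTneq lt_in => size_b'.
    by rewrite -start_b' size_b' psumn_size l_sum ltnn.
  exists b', 0%N; rewrite expr0 mulmx1 addn0 start_b'; split=> //.
  by move/allP: l_pos; apply; rewrite mem_nth.
exists b, j.+1; rewrite row_i -mulmxA mulmxE -exprSr addnS; split=> //.
rewrite ltn_neqAle lt_j andbT; apply: contraFneq nbs_i => eq_j.
by apply/block_startsP; exists b.+1; rewrite // psumnS // -eq_j addnS.
Qed.

Lemma chain_row_last i : (i < n)%N -> i.+1 \in bs -> chain_row i *m N = 0.
Proof.
move=> lt_in /block_startsP [k /andP [k_pos le_k] eq_k].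
have [b [j [lt_b lt_j eq_i row_i]]] := chain_rowP lt_in.
have eq_kb : k = b.+1.
  apply/eqP; rewrite eqn_leq; apply/andP; split.
    rewrite leqNgt; apply/negP => lt_bk.
    have := ltn_psumn l_pos lt_bk le_k; rewrite psumnS // -eq_k eq_i.
    by rewrite ltnS leq_add2l leqNgt lt_j.
  rewrite ltnNge; apply/negP => le_kb.
  by have := leq_psumn l le_kb; rewrite -eq_k eq_i ltnNge leq_addr.
rewrite row_i -mulmxA mulmxE -exprSr.
by move: eq_k; rewrite eq_kb psumnS // eq_i -addnS => /addnI ->; apply: v_nil.
Qed.

Lemma chain_row_first b : (b < size l)%N -> exists2 i, (i < n)%N & chain_row i = v b.
Proof.
move=> lt_b; have lt_n : (psumn l b < n)%N.
  by rewrite -l_sum -psumn_size ltn_psumn.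
case: b lt_b lt_n => [|b] lt_b lt_n; first by rewrite psumn0 in lt_n; exists 0%N.
exists (psumn l b.+1) => //.
have bs_b : psumn l b.+1 \in bs by apply/block_startsP; exists b.+1; rewrite //= ltnW.
have [le_idx start_idx] := index_block_starts bs_b.
have idx_b : (index (psumn l b.+1) bs).+1 = b.+1.
  by apply: (psumn_inj l_pos) => //; exact: ltnW.
have : (0 < psumn l b.+1)%N by rewrite -(psumn0 l) ltn_psumn // ltnW.
by case: (psumn l b.+1) bs_b idx_b => [|i] bs_i idx_i //= _; rewrite bs_i idx_i.
Qed.

Definition chain_mx : 'M[F]_n := \matrix_(i < n) chain_row i.

Lemma chain_mx_nil : chain_mx *m N = jordan_nil F n l *m chain_mx.
Proof.
apply/row_matrixP => i; rewrite !row_mul rowK.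
have [bs_i|nbs_i] := boolP (i.+1 \in bs).
  rewrite (_ : row i (jordan_nil F n l) = 0) ?mul0mx ?chain_row_last //.
  by apply/rowP => j; rewrite !mxE bs_i andbF.
have lt_in : (i.+1 < n)%N.
  rewrite ltn_neqAle ltn_ord andbT; apply: contraNneq nbs_i => eq_in.
  have l_nil : l != [::].
    apply: contraTneq (leq_ltn_trans (leq0n i) (ltn_ord i)) => l_nil.
    by rewrite -l_sum l_nil.
  apply/block_startsP; exists (size l); last by rewrite psumn_size l_sum.
  by rewrite lt0n size_eq0 l_nil /=.
have -> : row i (jordan_nil F n l) = delta_mx 0 (Ordinal lt_in).
  by apply/rowP => j; rewrite !mxE nbs_i andbT.
by rewrite -rowE rowK /= (negbTE nbs_i).
Qed.

Lemma is_jordan_type_chains k : sorted geq l -> N ^+ k = 0 ->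
    (forall W : 'M_n, (forall b, (b < size l)%N -> (v b <= W)%MS) -> (N <= W)%MS ->
       (1%:M <= W)%MS) ->
  is_jordan_type (1%:M + N) l.
Proof.
move=> l_sorted N_nil v_span; split=> //.
have chain_stable : (chain_mx *m N <= chain_mx)%MS by rewrite chain_mx_nil submxMl.
have chain_full : (1%:M <= chain_mx + N)%MS.
  apply: v_span; last exact: addsmxSr.
  move=> b /chain_row_first [i lt_in <-]; apply: submx_trans (addsmxSl _ _).
  by have := row_sub (Ordinal lt_in) chain_mx; rewrite rowK.
have chain_unit : chain_mx \in unitmx.
  by rewrite -row_full_unit -sub1mx (sub1mx_addsmx_nilpotent chain_stable N_nil).
exists chain_mx => //.
by rewrite mulmxDr mulmx1 chain_mx_nil -{1}[chain_mx]mul1mx -mulmxDl -jordan_diagE mulmxK.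
Qed.

End JordanChains.

Lemma prime_dvd_bin_mulX p e a i :
  prime p -> (0 < i < p ^ e)%N -> (p %| 'C(a * p ^ e, i))%N.
Proof.
move=> p_prime /andP [i_pos lt_i]; case: i i_pos lt_i => // i _ lt_i.
apply: contraT => ndvd_p.
have coprime_pX : coprime (p ^ e) 'C(a * p ^ e, i.+1) by rewrite coprimeXl // prime_coprime.
have : (p ^ e %| i.+1 * 'C(a * p ^ e, i.+1))%N.
  by rewrite -mul_bin_diag dvdn_mulr // dvdn_mull.
by rewrite Gauss_dvdl // => /dvdn_leq; lia.
Qed.

Section PrimeCharacteristic.
Variables (R : pzRingType) (p : nat).
Hypotheses (p_prime : prime p) (p_zero : p%:R = 0 :> R).

Let natr_pdvd c : (p %| c)%N -> c%:R = 0 :> R.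
Proof. by case/dvdnP => k ->; rewrite natrM p_zero mulr0. Qed.

Lemma exprDp_comm (x y : R) : GRing.comm x y -> (x + y) ^+ p = x ^+ p + y ^+ p.
Proof.
move=> cxy; rewrite exprDn_comm //.
have [p' def_p] : exists p', p = p'.+2 by case: p p_prime => [|[|p']] //; exists p'.
rewrite def_p big_ord_recr big_ord_recl /= big1 => [|i _].
  by rewrite subn0 subnn bin0 binn expr0 mulr1 mul1r addr0.
rewrite -mulr_natl natr_pdvd ?mul0r // -def_p prime_dvd_bin //.
by move: (ltn_ord i); rewrite /bump /=; lia.
Qed.

Lemma exprDpX_comm (x y : R) e : GRing.comm x y ->
  (x + y) ^+ (p ^ e) = x ^+ (p ^ e) + y ^+ (p ^ e).
Proof.
move=> cxy; elim: e => [|e IH]; first by rewrite !expn0 !expr1.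
rewrite expnSr !exprM IH exprDp_comm //.
by apply: commrX; apply/commr_sym; apply: commrX; apply/commr_sym.
Qed.

Lemma natr_bin_predX a e i : (0 < a)%N -> (i < p ^ e)%N ->
  ('C((a * p ^ e).-1, i)%:R : R) = (-1) ^+ i.
Proof.
move=> a_pos; elim: i => [|i IH] lt_i; first by rewrite bin0 expr0.
have q_pos : (0 < a * p ^ e)%N by rewrite muln_gt0 a_pos expn_gt0 prime_gt0.
have := binS (a * p ^ e).-1 i; rewrite prednK // => Pascal.
have := natr_pdvd (@prime_dvd_bin_mulX p e a i.+1 p_prime lt_i).
rewrite Pascal natrD IH ?(ltnW lt_i) // => /eqP; rewrite addr_eq0 => /eqP ->.
by rewrite exprS mulN1r.
Qed.

End PrimeCharacteristic.

Section TensorAdditive.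
Variable R : pzRingType.

Lemma tensmxDl m n p q (A B : 'M[R]_(m, n)) (C : 'M[R]_(p, q)) :
  (A + B) *t C = A *t C + B *t C.
Proof. by apply/matrixP => i j; rewrite !mxE mulrDl. Qed.

Lemma tensmxDr m n p q (A : 'M[R]_(m, n)) (B C : 'M[R]_(p, q)) :
  A *t (B + C) = A *t B + A *t C.
Proof. by apply/matrixP => i j; rewrite !mxE mulrDr. Qed.

Lemma tensmx11 m n : (1%:M : 'M[R]_m) *t (1%:M : 'M[R]_n) = 1%:M.
Proof.
apply/matrixP => i j.
case: (mxtens_indexP i) => i1 i2; case: (mxtens_indexP j) => j1 j2.
by rewrite tensmxE !mxE -natrM mulnb (inj_eq (can_inj (@mxtens_indexK _ _))) xpair_eqE.
Qed.

End TensorAdditive.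

Lemma block_starts1 n : block_starts [:: n] = [:: n].
Proof. by rewrite /block_starts /= addn0. Qed.

Section JordanBlock.
Variable F : fieldType.

Lemma jordan_blockE n : jordan_block F n = 1%:M + jordan_nil F n [:: n].
Proof.
rewrite -jordan_diagE; apply/matrixP => i j; rewrite !mxE block_starts1 inE.
case: (j =P i.+1 :> nat) => [<-|_] /=; rewrite ?orbF ?andbF //.
by rewrite (ltn_eqF (ltn_ord j)) !orbT.
Qed.

Lemma jordan_nil1X n k (i j : 'I_n) :
  (jordan_nil F n [:: n] ^+ k) i j = (j == (i + k)%N :> nat)%:R.
Proof.
rewrite jordan_nilX block_starts1; case: eqP => //= eq_j.
rewrite [all _ _](_ : _ = true) //; apply/allP => t.
by rewrite mem_iota inE neq_ltn => /andP [_ le_t]; move: (ltn_ord j); rewrite eq_j; lia.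
Qed.

Lemma jordan_nil1X_eq0 n k : (n <= k)%N -> jordan_nil F n [:: n] ^+ k = 0.
Proof.
move=> le_nk; apply/matrixP => i j; rewrite jordan_nil1X mxE.
by rewrite (_ : (j == (i + k)%N :> nat) = false) //; move: (ltn_ord j); lia.
Qed.

End JordanBlock.

Section TensorDecomposition.
Variables (F : fieldType) (r s : nat).

Definition nil_left : 'M[F]_(r * s) := jordan_nil F r [:: r] *t 1%:M.
Definition nil_right : 'M[F]_(r * s) := 1%:M *t jordan_nil F s [:: s].
Definition nil_tens := nil_left + nil_right + nil_left * nil_right.
Local Notation X := nil_left.
Local Notation Y := nil_right.
Local Notation N := nil_tens.

Lemma nil_leftX k : X ^+ k = jordan_nil F r [:: r] ^+ k *t 1%:M.
Proof.
elim: k => [|k IH]; first by rewrite !expr0 tensmx11.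
by rewrite !exprS IH -!mulmxE tensmx_mul mulmx1.
Qed.

Lemma nil_rightX k : Y ^+ k = 1%:M *t jordan_nil F s [:: s] ^+ k.
Proof.
elim: k => [|k IH]; first by rewrite !expr0 tensmx11.
by rewrite !exprS IH -!mulmxE tensmx_mul mulmx1.
Qed.

Lemma nil_leftX_eq0 k : (r <= k)%N -> X ^+ k = 0.
Proof. by move=> le_rk; rewrite nil_leftX jordan_nil1X_eq0 // tens0mx. Qed.

Lemma nil_rightX_eq0 k : (s <= k)%N -> Y ^+ k = 0.
Proof. by move=> le_sk; rewrite nil_rightX jordan_nil1X_eq0 // tensmx0. Qed.

Lemma comm_nil_leftX_rightX a c : GRing.comm (X ^+ a) (Y ^+ c).
Proof. by rewrite /GRing.comm nil_leftX nil_rightX -!mulmxE !tensmx_mul !mulmx1 !mul1mx. Qed.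

Lemma comm_nil_left_right : GRing.comm X Y.
Proof. exact: (comm_nil_leftX_rightX 1 1). Qed.

Lemma comm_nil_tens_left : GRing.comm N X.
Proof.
have cXY := comm_nil_left_right.
apply/commr_sym; apply: commrD; first by apply: commrD; [exact: commr_refl | exact: cXY].
by apply: commrM; [exact: commr_refl | exact: cXY].
Qed.

Lemma jordan_block_tensE : jordan_block F r *t jordan_block F s = 1%:M + N.
Proof.
rewrite !jordan_blockE tensmxDl !tensmxDr tensmx11 /nil_tens /nil_left /nil_right.
rewrite -mulmxE tensmx_mul mulmx1 mul1mx.
by rewrite !addrA (addrAC 1%:M).
Qed.

Lemma nil_tens_factor : 1 + N = (1 + X) * (1 + Y).
Proof. by rewrite mulrDl !mulrDr !mul1r mulr1 !addrA (addrAC 1). Qed.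

End TensorDecomposition.

Section TensorChains.
Variables (F : fieldType) (r s : nat).
Hypotheses (r_pos : (0 < r)%N) (s_pos : (0 < s)%N).
Local Notation X := (nil_left F r s).
Local Notation Y := (nil_right F r s).
Local Notation N := (nil_tens F r s).

Definition tens_e0 : 'rV[F]_(r * s) :=
  delta_mx 0 (mxtens_index (Ordinal r_pos, Ordinal s_pos)).
Local Notation e0 := tens_e0.

Lemma tens_e0_mulX a c (lt_a : (a < r)%N) (lt_c : (c < s)%N) :
  e0 *m (X ^+ a * Y ^+ c) = delta_mx 0 (mxtens_index (Ordinal lt_a, Ordinal lt_c)).
Proof.
rewrite nil_leftX nil_rightX -mulmxE tensmx_mul mulmx1 mul1mx -rowE.
apply/rowP => j; case: (mxtens_indexP j) => j1 j2.
rewrite mxE tensmxE !jordan_nil1X !mxE (inj_eq (can_inj (@mxtens_indexK _ _))) -natrM mulnb.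
by rewrite xpair_eqE !add0n; congr (_%:R); congr (_ && _); rewrite eq_sym.
Qed.

(* Modulo the image of [N = X + Y + X * Y], the vector [e0 *m X ^+ a * Y ^+ c.+1] is a
   combination of vectors with a smaller [c] or a larger [a]. *)
Lemma sub1mx_tens_e0 (W : 'M[F]_(r * s)) :
  (forall a, (a < r)%N -> (e0 *m X ^+ a <= W)%MS) -> (N <= W)%MS -> (1%:M <= W)%MS.
Proof.
move=> e0X_W N_W.
have mulN_W (u : 'rV_(r * s)) : (u *m N <= W)%MS by apply: submx_trans (submxMl u N) N_W.
suff e0XY_W c a : (e0 *m (X ^+ a * Y ^+ c) <= W)%MS.
  apply/row_subP => i; rewrite row1; case: (mxtens_indexP i) => a c.
  rewrite (_ : mxtens_index (a, c) = mxtens_index (Ordinal (ltn_ord a), Ordinal (ltn_ord c))).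
    by rewrite -(tens_e0_mulX (ltn_ord a) (ltn_ord c)).
  by congr mxtens_index; congr pair; apply: val_inj.
elim: c a => [|c IHc] a.
  rewrite expr0 mulr1; have [/e0X_W //|le_ra] := ltnP a r.
  by rewrite nil_leftX_eq0 // mulmx0 sub0mx.
suff e0XYS_W d : (r <= a + d)%N -> (e0 *m (X ^+ a * Y ^+ c.+1) <= W)%MS.
  by apply: (e0XYS_W r); rewrite leq_addl.
elim: d a => [|d IHd] a le_rad.
  by rewrite nil_leftX_eq0 ?mul0r ?mulmx0 ?sub0mx // -(addn0 a).
have cYX : Y ^+ c * X = X * Y ^+ c by have := comm_nil_leftX_rightX F r s 1 c; rewrite expr1.
have -> : X ^+ a * Y ^+ c.+1 =
    X ^+ a * Y ^+ c * N - X ^+ a.+1 * Y ^+ c - X ^+ a.+1 * Y ^+ c.+1.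
  rewrite /nil_tens !mulrDr -!mulrA cYX !mulrA -exprSr.
  rewrite -[X ^+ a * Y ^+ c * Y]mulrA -exprSr.
  rewrite -[X ^+ a * Y ^+ c * X]mulrA cYX mulrA -exprSr.
  rewrite -[X ^+ a.+1 * Y ^+ c * Y]mulrA -exprSr.
  by rewrite (addrAC (_ + _)) addrK (addrC (X ^+ a.+1 * _)) addrK.
rewrite !mulmxBr; apply: addmx_sub; first apply: addmx_sub.
- by rewrite -mulmxE mulmxA mulN_W.
- by rewrite eqmx_opp IHc.
by rewrite eqmx_opp IHd // addSnnS.
Qed.

Section PrimeCharacteristic.
Variables (p m : nat).
Hypotheses (p_prime : prime p) (p_char : p \in [pchar F]) (le_rpm : (r <= p ^ m)%N).

Let p_zero : p%:R = 0 :> 'M[F]_(r * s).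
Proof. by rewrite -scaler_nat (pcharf0 p_char) scale0r. Qed.

Lemma nil_tensX_pchar a : N ^+ (a * p ^ m) = Y ^+ (a * p ^ m).
Proof.
have frob (M : 'M[F]_(r * s)) : (1 + M) ^+ (p ^ m) = 1 + M ^+ (p ^ m).
  by rewrite exprDpX_comm ?expr1n //; apply/commr_sym/commr1.
have c1XY : GRing.comm (1 + X) (1 + Y).
  apply: commrD; first exact: commr1.
  by apply/commr_sym/commrD; [exact: commr1 | exact/commr_sym/comm_nil_left_right].
rewrite [(a * _)%N]mulnC !exprM; congr (_ ^+ a); apply: (@addrI _ 1).
by rewrite -frob nil_tens_factor exprMn_comm // !frob nil_leftX_eq0 // addr0 mul1r.
Qed.

Hypothesis le_rs : (r <= s)%N.

Section PredMultiple.
Variable a : nat.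
Hypothesis s_pred : s.-1 = (a * p ^ m)%N.

Lemma nil_tensX_pred k : N ^+ (s.-1 + k) = Y ^+ s.-1 * X ^+ k.
Proof.
rewrite exprD s_pred nil_tensX_pchar -s_pred.
elim: k => [|k IH]; first by rewrite !expr0.
have YsXY j : Y ^+ s.-1 * X ^+ j * Y = 0.
  have cXY : X ^+ j * Y = Y * X ^+ j.
    by have := comm_nil_leftX_rightX F r s j 1; rewrite expr1.
  by rewrite -mulrA cXY mulrA -exprSr prednK // nil_rightX_eq0 // mul0r.
rewrite exprSr mulrA IH /nil_tens !mulrDr YsXY addr0 mulrA.
by rewrite -(mulrA _ (X ^+ k)) -exprSr YsXY addr0.
Qed.

Definition pred_chain b := if b == 0%N then e0 else e0 *m X ^+ b - e0 *m N ^+ b.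

Lemma jordan_type_tens_pred : is_jordan_type (1%:M + N) ((s.-1 + r)%N :: nseq r.-1 s.-1).
Proof.
apply: (@is_jordan_type_chains _ _ _ _ pred_chain _ _ _ (s.-1 + r)).
- by rewrite /= all_nseq; apply/andP; split; [lia | apply/orP; case: (ltnP 1 r); lia].
- rewrite /= sumn_nseq; case: r r_pos => // r' _; case: s s_pos => // s' _ /=.
  by rewrite mulSn mulnS [(s' * r')%N]mulnC; lia.
- move=> [|b]; first by rewrite /pred_chain /= nil_tensX_pred nil_leftX_eq0 // mulr0 mulmx0.
  rewrite /= size_nseq ltnS => lt_b; rewrite nth_nseq lt_b /pred_chain /=.
  have NsY := nil_tensX_pred 0; rewrite addn0 expr0 mulr1 in NsY.
  rewrite mulmxBl -!mulmxA !mulmxE -!exprD [(b.+1 + _)%N]addnC nil_tensX_pred NsY.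
  by rewrite (comm_nil_leftX_rightX F r s b.+1 s.-1) subrr.
- by apply: sorted_nseq_cons; rewrite leq_addr.
- by rewrite nil_tensX_pred nil_leftX_eq0 // mulr0.
move=> W chain_W N_W; apply: sub1mx_tens_e0 => // -[_|b lt_b].
  by rewrite expr0 mulmx1; apply: (chain_W 0%N).
have /chain_W : (b.+1 < size ((s.-1 + r)%N :: nseq r.-1 s.-1))%N.
  by rewrite /= size_nseq; lia.
rewrite /pred_chain /= => chain_b.
rewrite -(subrK (e0 *m N ^+ b.+1) (e0 *m X ^+ b.+1)); apply: addmx_sub => //.
by rewrite exprSr -mulmxE mulmxA; apply: submx_trans N_W; exact: submxMl.
Qed.

End PredMultiple.

Section SuccMultiple.
Variable a : nat.
Hypothesis s_succ : s.+1 = (a * p ^ m)%N.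

Lemma nil_tensX_succ : N ^+ s.+1 = 0.
Proof. by rewrite s_succ nil_tensX_pchar -s_succ nil_rightX_eq0. Qed.

(* [binomial(s, j) = (-1) ^+ j] in [F] for [j < r], while [X ^+ j = 0] for [j >= r]. *)
Lemma nil_tens_subX : (N - X) ^+ s = \sum_(0 <= j < r) X ^+ j * N ^+ (s - j).
Proof.
have cNX := comm_nil_tens_left F r s.
rewrite exprBn_comm //.
rewrite -(big_mkord xpredT (fun j => ((-1) ^+ j * N ^+ (s - j) * X ^+ j) *+ 'C(s, j))).
rewrite (@big_cat_nat _ _ _ r) ?leqW //= [T in _ + T]big_nat_cond.
rewrite [T in _ + T]big1 ?addr0 => [|j /andP [/andP [le_rj _] _]]; last first.
  by rewrite nil_leftX_eq0 // mulr0 mul0rn.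
apply: eq_big_nat => j /andP [_ lt_jr].
have a_pos : (0 < a)%N by move: s_succ; case: a.
have := natr_bin_predX p_prime p_zero a_pos (leq_trans lt_jr le_rpm).
rewrite -s_succ /= => bin_j.
rewrite -mulr_natl bin_j -!mulrA signrMK.
by apply/commr_sym/commrX/commr_sym/commrX.
Qed.

Definition succ_chain_last := \sum_(0 <= j < r) e0 *m (X ^+ j * N ^+ (r.-1 - j)).
Definition succ_chain b := if (b < r.-1)%N then e0 *m X ^+ b else succ_chain_last.

(* [N - X = Y * (1 + X)] and [Y ^+ s = 0]. *)
Lemma succ_chain_last_nil : succ_chain_last *m N ^+ (s - r.-1) = 0.
Proof.
rewrite /succ_chain_last mulmx_suml.
rewrite (eq_big_nat _ _ (F2 := fun j => e0 *m (X ^+ j * N ^+ (s - j)))); last first.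
  move=> j /andP [_ lt_jr]; rewrite -mulmxA mulmxE -mulrA -exprD; do 3!f_equal; lia.
have cYX := comm_nil_leftX_rightX F r s 1 1; rewrite !expr1 in cYX.
rewrite -mulmx_sumr -nil_tens_subX /nil_tens (addrAC (X + Y)) (addrAC X) subrr add0r.
rewrite cYX -{1}[Y]mulr1 -mulrDr exprMn_comm ?nil_rightX_eq0 ?mul0r ?mulmx0 //.
by apply: commrD; [exact: commr1 | exact/commr_sym].
Qed.

Lemma jordan_type_tens_succ :
  is_jordan_type (1%:M + N) (rcons (nseq r.-1 s.+1) (s - r.-1)%N).
Proof.
have size_l : size (rcons (nseq r.-1 s.+1) (s - r.-1)%N) = r.
  by rewrite size_rcons size_nseq prednK.
apply: (@is_jordan_type_chains _ _ _ _ succ_chain _ _ _ s.+1).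
- by rewrite all_rcons all_nseq /=; apply/andP; split; [lia | rewrite orbT].
- rewrite sumn_rcons sumn_nseq; case: r r_pos le_rs => // r' _ /= le_rs'.
  by rewrite !mulSn [(r' * s)%N]mulnC; lia.
- move=> b; rewrite size_l => lt_b; rewrite nth_rcons size_nseq /succ_chain.
  case: ifP => [lt_b'|/negbT]; first by rewrite nth_nseq lt_b' nil_tensX_succ mulmx0.
  by rewrite -leqNgt => le_b; rewrite (_ : b = r.-1) ?eqxx ?succ_chain_last_nil //; lia.
- by apply: sorted_rcons_nseq; rewrite leqW ?leq_subr.
- exact: nil_tensX_succ.
move=> W chain_W N_W; apply: sub1mx_tens_e0 => // b lt_b.
have [lt_b'|le_b] := ltnP b r.-1.
  by have := chain_W b; rewrite size_l /succ_chain lt_b'; apply.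
have /chain_W : (r.-1 < size (rcons (nseq r.-1 s.+1) (s - r.-1)%N))%N by rewrite size_l prednK.
rewrite /succ_chain ltnn /succ_chain_last (@big_cat_nat _ _ _ r.-1) ?leq_pred //=.
have -> : \sum_(r.-1 <= j < r) e0 *m (X ^+ j * N ^+ (r.-1 - j)) = e0 *m X ^+ r.-1.
  by rewrite big_ltn ?prednK // big_geq ?prednK // subnn expr0 mulr1 addr0.
rewrite (_ : b = r.-1); last lia.
set head := \sum_(0 <= j < r.-1) _ => chain_last.
rewrite -(addKr head (e0 *m X ^+ r.-1)); apply: addmx_sub => //.
rewrite eqmx_opp /head big_nat_cond; apply: summx_sub => j /andP [/andP [_ lt_j] _].
rewrite -(prednK (_ : (0 < r.-1 - j)%N)) ?subn_gt0 // exprSr mulmxA -mulmxE mulmxA.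
exact: submx_trans (submxMl _ _) N_W.
Qed.

End SuccMultiple.

End PrimeCharacteristic.
End TensorChains.

Lemma deviation_inj s : injective (deviation s).
Proof. by apply: inj_map => x y /(congr1 (+%R^~ s%:Z)) /=; rewrite !subrK => -[]. Qed.

Unset Implicit Arguments.

Theorem proposition13 (p m r s : nat) :
  prime p -> (0 < r)%N -> (0 < s)%N -> (r <= minn s (p ^ m))%N ->
  forall (F : fieldType), p \in [pchar F] ->
  let A := (jordan_block F r *t jordan_block F s) in
  ((s = 1 %[mod p ^ m])%N ->
     forall l : seq nat, is_jordan_type A l <->
       deviation s l = (r%:Z - 1) :: nseq r.-1 (-1)) /\
  ((s.+1 = 0 %[mod p ^ m])%N ->
     forall l : seq nat, is_jordan_type A l <->
       deviation s l = rcons (nseq r.-1 1) (- (r%:Z - 1))).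
Proof.
move=> p_prime r_pos s_pos; rewrite leq_min => /andP [le_rs le_rpm] F p_char A.
have type_iff l dev : is_jordan_type (1%:M + nil_tens F r s) l -> deviation s l = dev ->
    forall l', is_jordan_type A l' <-> deviation s l' = dev.
  rewrite /A jordan_block_tensE => type_l <- l'.
  by rewrite (is_jordan_typeE type_l); split=> [->|/deviation_inj].
split=> s_mod.
- have /dvdnP [a s_pred] : (p ^ m %| s.-1)%N by rewrite -subn1 -eqn_mod_dvd // s_mod.
  apply: type_iff (jordan_type_tens_pred r_pos s_pos p_prime p_char le_rpm le_rs s_pred) _.
  by rewrite /deviation /= map_nseq; congr (_ :: nseq _ _); lia.
have /dvdnP [a s_succ] : (p ^ m %| s.+1)%N by rewrite /dvdn s_mod mod0n.
apply: type_iff (jordan_type_tens_succ r_pos s_pos p_prime p_char le_rpm le_rs s_succ) _.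
by rewrite /deviation map_rcons map_nseq; congr (rcons (nseq _ _) _); lia.
Qed.
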